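(* Let $L$ be a simplicial complex and $K\subseteq L$ a subcomplex such that the relative complex $(L,K)$ has dimension $d$, i.e. $d=\max\{\dim F: F\in L\setminus K\}$. Let $\kappa:V(K)\to\{0,1,\dots,m-1\}$ be a proper $m$-coloring of $K$ (it need not be proper on edges of $L\setminus K$). Then there is a complex $L'$, obtained from $L$ by a finite sequence of stellar subdivisions, such that (1) $K$ is a subcomplex of $L'$ (no face of $K$ is subdivided), and (2) $\kappa$ extends to a proper coloring $\kappa':V(L')\to\{0,1,\dots,\max\{m-1,d\}\}$ such that every vertex of $L'$ not in $K$ receives a color in $\{0,1,\dots,d\}$.
   Context: All simplicial complexes are finite abstract simplicial complexes. For a finite set $F$, $\overline{F}$ denotes the simplex of all subsets of $F$ and $\partial\overline{F}$ the complex of proper subsets; $*$ denotes join; $\mathrm{lk}_\Delta(F)=\{G\in\Delta: F\cap G=\emptyset, F\cup G\in\Delta\}$. The stellar subdivision of $\Delta$ at a nonempty face $F$ is $\mathrm{sd}_F(\Delta)=\{G\in\Delta: F\not\subseteq G\}\cup(\overline{\{a\}}*\partial\overline{F}*\mathrm{lk}_\Delta(F))$, where $a$ is a new vertex. A proper $m$-coloring of a complex is a map from its vertex set to $\{0,\dots,m-1\}$ giving distinct colors to the endpoints of every edge. *)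

From mathcomp Require Import all_boot.
Set Implicit Arguments. Unset Strict Implicit. Unset Printing Implicit Defensive.

(* A face (finite set of vertices) is represented canonically by the
   strictly increasing list of its vertices. *)
Definition is_face (F : seq nat) : bool := sorted ltn F.

Definition fsub (G F : seq nat) : bool := all (fun x => x \in F) G.

(* A (finite abstract) simplicial complex: a finite list of faces,
   closed under taking subsets (membership in the list is what matters). *)
Definition is_complex (D : seq (seq nat)) : Prop :=
  (forall F, F \in D -> is_face F) /\
  (forall F G, F \in D -> is_face G -> fsub G F -> G \in D).

Definition vert (D : seq (seq nat)) (v : nat) : Prop := exists2 F, F \in D & v \in F.

Definition link (D : seq (seq nat)) (F G : seq nat) : Prop :=
  G \in D /\ (forall x, x \in F -> x \notin G) /\
  exists2 U, U \in D & U =i F ++ G.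

(* D' is the stellar subdivision sd_F(D) of D at the nonempty face F,
   with new vertex a:
   sd_F(D) = {G in D : F not subset of G} cup ({a} * boundary(F) * lk_D(F)). *)
Definition stellar (D : seq (seq nat)) (F : seq nat) (a : nat) (D' : seq (seq nat)) : Prop :=
  F \in D /\ F != [::] /\ ~ vert D a /\
  (forall G, G \in D' -> is_face G) /\
  (forall G, is_face G ->
     (G \in D' <->
        ((G \in D /\ ~~ fsub F G) \/
         (exists P H, fsub P F /\ ~~ fsub F P /\ link D F H /\
                      G =i a :: P ++ H)))).

Inductive stellar_seq : seq (seq nat) -> seq (seq nat) -> Prop :=
  | ss_refl D : stellar_seq D D
  | ss_step D F a D' D'' : stellar D F a D' -> stellar_seq D' D'' -> stellar_seq D D''.

Definition proper_coloring (D : seq (seq nat)) (c : nat -> nat) (m : nat) : Prop :=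
  (forall v, vert D v -> c v < m) /\
  (forall x y, [:: x; y] \in D -> c x != c y).

(* the relative complex (L, K) has dimension d:
   d = max { dim F : F in L \ K }, where dim F = |F| - 1 *)
Definition rel_dim (L K : seq (seq nat)) (d : nat) : Prop :=
  (exists2 F, F \in L & (F \notin K) && (size F == d.+1)) /\
  (forall F, F \in L -> F \notin K -> size F <= d.+1).

From mathcomp Require Import all_boot.
Set Implicit Arguments. Unset Strict Implicit. Unset Printing Implicit Defensive.
Implicit Types (D K L : seq (seq nat)) (F G H P U : seq nat) (a p q u v w x y : nat).
Implicit Types (col : nat -> bool) (c : nat -> nat) (Phi Ps : seq nat).

(* Monochromatic edges between vertices of K are subdivided first, at new
   uncolored vertices; as kappa is proper on K, none of them lies in K.  The other
   vertices are then colored one at a time.  When a vertex w clashes with a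
   neighbor u, the edge wu is subdivided at a new vertex a, which gets a color
   <= d avoiding c w and the colors Phi already forbidden at w.  A face through a
   lies in an old face through w and u with one of them removed, and w, u both
   have color c w; hence a has one rival fewer per face than w, where a rival is a
   colored vertex whose color is outside the forbidden list.  The clashes of a are
   resolved recursively before those of w.  This terminates and never runs out of
   colors because size Phi plus the rival bound stays at most d, as it is
   initially: faces of L outside K have at most d + 1 vertices. *)

Lemma count_le_rem (T : eqType) (f : T) (e s t : seq T) (P Q : pred T) :
  uniq s -> uniq t -> f \in t -> Q f ->
  {in s, forall z, P z -> z \in e \/ [/\ z != f, z \in t & Q z]} ->
  count P s <= size e + (count Q t).-1.
Proof.
move=> us ut ft Qf sub; rewrite -!size_filter.
have fQ : f \in filter Q t by rewrite mem_filter Qf ft.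
rewrite -(size_rem fQ) -size_cat; apply: uniq_leq_size; first exact: filter_uniq.
move=> z; rewrite mem_filter => /andP [Pz zs]; rewrite mem_cat.
rewrite (mem_rem_uniq _ (filter_uniq _ ut)) inE mem_filter.
by case: (sub z zs Pz) => [->|[-> -> ->]]; rewrite ?orbT.
Qed.

Lemma count_undup_lt (T : eqType) (f : T) (s t : seq T) (P Q : pred T) :
  f \in t -> Q f -> {in s, forall z, P z -> [/\ z != f, z \in t & Q z]} ->
  count P (undup s) < count Q (undup t).
Proof.
move=> ft Qf sub.
have pos : 0 < count Q (undup t) by rewrite -has_count; apply/hasP; exists f; rewrite ?mem_undup.
rewrite -(prednK pos) ltnS -[_.-1]add0n.
apply: (count_le_rem (f := f) (e := [::])); rewrite ?undup_uniq ?mem_undup //.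
by move=> z; rewrite mem_undup => zs Pz; right; have [-> zt ->] := sub z zs Pz; rewrite mem_undup.
Qed.

Lemma pick_color (s : seq nat) d : size s <= d -> exists2 z, z <= d & z \notin s.
Proof.
move=> hs; have /allPn [z] : ~~ all (mem s) (iota 0 d.+1).
  apply/negP => /allP sub; have := uniq_leq_size (iota_uniq 0 d.+1) sub.
  by rewrite size_iota => /leq_trans /(_ hs); rewrite ltnn.
by rewrite mem_iota ltnS => zd zs; exists z.
Qed.

Lemma face_uniq F : is_face F -> uniq F.
Proof. exact: (sorted_uniq ltn_trans ltnn). Qed.

Lemma face_eq F G : is_face F -> is_face G -> F =i G -> F = G.
Proof. exact: (irr_sorted_eq ltn_trans ltnn). Qed.

Definition canon (s : seq nat) : seq nat := sort leq (undup s).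

Lemma canon_face s : is_face (canon s).
Proof.
rewrite /is_face ltn_sorted_uniq_leq sort_uniq undup_uniq sort_sorted //.
exact: leq_total.
Qed.

Lemma mem_canon s : canon s =i s.
Proof. by move=> x; rewrite /canon mem_sort mem_undup. Qed.

Lemma fsubP G F : reflect {subset G <= F} (fsub G F).
Proof. exact: allP. Qed.

Lemma complex_face D F : is_complex D -> F \in D -> is_face F.
Proof. by case=> h _ /h. Qed.

Lemma complex_sub D F G :
  is_complex D -> F \in D -> is_face G -> {subset G <= F} -> G \in D.
Proof. by move=> [_ cl] FD fG sGF; apply: (cl F) => //; apply/fsubP. Qed.

Lemma complex_canon D F s : is_complex D -> F \in D -> {subset s <= F} -> canon s \in D.
Proof.
move=> cD FD sF; apply: (complex_sub cD FD (canon_face s)) => x.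
by rewrite mem_canon => /sF.
Qed.

Lemma vertP D v : reflect (vert D v) (v \in flatten D).
Proof. exact: flattenP. Qed.

Definition adjacent D x y := (x != y) && has (fun F => (x \in F) && (y \in F)) D.

Lemma adjacentP D x y :
  reflect (x != y /\ exists2 F, F \in D & (x \in F) && (y \in F)) (adjacent D x y).
Proof.
apply: (iffP andP) => [[-> /hasP [F FD h]]|[-> [F FD h]]]; split => //.
  by exists F.
by apply/hasP; exists F.
Qed.

Lemma adjacentC D x y : adjacent D x y = adjacent D y x.
Proof. by rewrite /adjacent eq_sym; congr (_ && _); apply: eq_has => F; apply: andbC. Qed.

Lemma adjacent_vert D x y : adjacent D x y -> vert D x /\ vert D y.
Proof. by move=> /adjacentP [_ [F FD /andP [xF yF]]]; split; exists F. Qed.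

Lemma edge_adjacent D x y : is_complex D -> [:: x; y] \in D -> adjacent D x y.
Proof.
move=> cD eD; have := complex_face cD eD; rewrite /is_face /= andbT => xy.
apply/adjacentP; split; first by rewrite neq_ltn xy.
by exists [:: x; y]; rewrite // !inE !eqxx ?orbT.
Qed.

Lemma adjacent_edge_sorted D x y :
  is_complex D -> adjacent D x y -> x < y -> [:: x; y] \in D.
Proof.
move=> cD /adjacentP [_ [F FD /andP [xF yF]]] xy.
apply: (complex_sub cD FD); first by rewrite /is_face /= xy.
by move=> z; rewrite !inE => /orP [] /eqP ->.
Qed.

Lemma adjacent_edge D x y : is_complex D -> adjacent D x y ->
  exists p q, [/\ p < q, [:: p; q] \in D & [:: p; q] =i [:: x; y]].
Proof.
move=> cD adj; have /andP [xy _] := adj.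
case: (ltngtP x y) => [lt|gt|eq]; last by rewrite eq eqxx in xy.
  by exists x, y; split=> //; apply: adjacent_edge_sorted.
exists y, x; split=> //; first by rewrite adjacentC in adj; apply: adjacent_edge_sorted.
by move=> z; rewrite !inE orbC.
Qed.

Definition fresh D : nat := (foldr maxn 0 (flatten D)).+1.

Lemma fresh_not_vert D : ~ vert D (fresh D).
Proof.
suff lt_fresh v : v \in flatten D -> v < fresh D by move/vertP/lt_fresh; rewrite ltnn.
rewrite /fresh ltnS; elim: (flatten D) => //= x s IH.
rewrite inE => /orP [/eqP ->|/IH h]; first exact: leq_maxl.
exact: leq_trans h (leq_maxr _ _).
Qed.

Lemma fresh_neq D v : vert D v -> v != fresh D.
Proof. by move=> vD; apply: contraPneq (@fresh_not_vert D) => <-. Qed.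

Definition in_link D F H :=
  all (fun x => x \notin H) F && has (fun U => fsub U (F ++ H) && fsub (F ++ H) U) D.

Lemma in_linkP D F H : reflect (link D F H) ((H \in D) && in_link D F H).
Proof.
apply: (iffP idP).
  move=> /andP [HD /andP [/allP dj /hasP [U UD /andP [/fsubP s1 /fsubP s2]]]].
  split=> //; split; first by move=> x /dj.
  by exists U => // x; apply/idP/idP; [apply: s1 | apply: s2].
move=> [HD [dj [U UD eU]]]; rewrite HD /=; apply/andP; split.
  by apply/allP => x /dj.
by apply/hasP; exists U => //; apply/andP; split; apply/fsubP => x; rewrite eU.
Qed.

Lemma proper_sub_edge p q P : p < q -> fsub P [:: p; q] -> ~~ fsub [:: p; q] P ->
  exists2 P0, P0 \in [:: [::]; [:: p]; [:: q]] & P0 =i P.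
Proof.
move=> pq /fsubP sP nP; exists [seq x <- [:: p; q] | x \in P]; last first.
  by move=> x; rewrite mem_filter andbC; apply/andP/idP => [[]//|xP]; split=> //; apply: sP.
move: nP; rewrite /fsub /=.
by case: (p \in P); case: (q \in P) => //= _; rewrite !inE eqxx ?orbT.
Qed.

Lemma enum_proper_sub_edge p q P0 : p < q -> P0 \in [:: [::]; [:: p]; [:: q]] ->
  fsub P0 [:: p; q] && ~~ fsub [:: p; q] P0.
Proof.
move=> pq; rewrite !inE => /or3P [] /eqP ->;
by rewrite /fsub /= ?inE ?eqxx ?orbT ?(gtn_eqF pq) ?(ltn_eqF pq).
Qed.

(* [[:: [::]; [:: p]; [:: q]]] lists the boundary of the edge {p, q}. *)
Definition sd_edge D p q a : seq (seq nat) :=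
  [seq G <- D | ~~ fsub [:: p; q] G] ++
  [seq canon (a :: P ++ H) | P <- [:: [::]; [:: p]; [:: q]],
                             H <- [seq H <- D | in_link D [:: p; q] H]].

Lemma sd_edge_stellar D p q a :
  is_complex D -> p < q -> [:: p; q] \in D -> ~ vert D a ->
  stellar D [:: p; q] a (sd_edge D p q a).
Proof.
move=> cD pq eD na; split=> //; split=> //; split=> //; split.
  move=> G; rewrite mem_cat => /orP [].
    by rewrite mem_filter => /andP [_ /(complex_face cD)].
  by move=> /allpairsP [[P H] [_ _ ->]]; apply: canon_face.
move=> G fG; split.
  rewrite mem_cat => /orP [].
    by rewrite mem_filter => /andP [nF GD]; left.
  move=> /allpairsP [[P H] /= [PP]]; rewrite mem_filter => /andP [lH HD] ->.
  have /andP [sP nP] := enum_proper_sub_edge pq PP.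
  by right; exists P, H; split=> //; split=> //; split; [apply/in_linkP; rewrite HD|apply: mem_canon].
move=> [[GD nF]|[P [H [sP [nP [lH eG]]]]]].
  by rewrite mem_cat mem_filter nF GD.
have [P0 P0P eP] := proper_sub_edge pq sP nP.
have -> : G = canon (a :: P0 ++ H).
  by apply: face_eq => // [|x]; [apply: canon_face | rewrite mem_canon eG !inE !mem_cat eP].
rewrite mem_cat; apply/orP; right.
apply: (allpairs_f (fun P H => canon (a :: P ++ H))) => //.
by move/in_linkP: lH => /andP [HD lH]; rewrite mem_filter lH HD.
Qed.

Section StellarSubdivision.
Variables (D D' : seq (seq nat)) (F : seq nat) (a : nat).
Hypothesis cD : is_complex D.
Hypothesis st : stellar D F a D'.

Lemma stellar_face G : G \in D' -> is_face G.
Proof. by case: st => _ [_ [_ [h _]]]; apply: h. Qed.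

Let stellar_mem G : is_face G -> (G \in D' <->
  ((G \in D /\ ~~ fsub F G) \/
   (exists P H, fsub P F /\ ~~ fsub F P /\ link D F H /\ G =i a :: P ++ H))).
Proof. by case: st => _ [_ [_ [_ h]]]; apply: h. Qed.

Lemma stellar_center : F \in D. Proof. by case: st. Qed.

Lemma stellar_apex_fresh : ~ vert D a. Proof. by case: st => _ [_ []]. Qed.

Lemma stellar_old_face G : G \in D' -> a \notin G -> G \in D /\ ~~ fsub F G.
Proof.
move=> GD aG; case: ((stellar_mem (stellar_face GD)).1 GD) => // [[P [H [_ [_ [_ e]]]]]].
by move: aG; rewrite e inE eqxx.
Qed.

Lemma stellar_new_face G : G \in D' -> a \in G ->
  exists P H U, [/\ {subset P <= F}, ~~ fsub F P, H \in D &
                    forall x, x \in F -> x \notin H] /\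
                [/\ U \in D, U =i F ++ H & G =i a :: P ++ H].
Proof.
move=> GD aG.
case: ((stellar_mem (stellar_face GD)).1 GD) => [[GD0 _]|].
  by case: stellar_apex_fresh; exists G.
move=> [P [H [/fsubP sP [nP [[HD [dj [U UD eU]]] e]]]]].
by exists P, H, U.
Qed.

Lemma stellar_new_face_cover G : G \in D' -> a \in G ->
  exists U f, [/\ U \in D, {subset F <= U}, f \in F, f \notin G & {subset G <= a :: U}].
Proof.
move=> GD aG; have [P [H [U [[sP nP _ dj] [UD eU eG]]]]] := stellar_new_face GD aG.
have [f fF fP] := allPn nP; exists U, f; split=> // [x xF||x].
- by rewrite eU mem_cat xF.
- rewrite eG inE mem_cat !negb_or fP (dj _ fF) !andbT.
  by apply/eqP => fa; apply: stellar_apex_fresh; exists F; rewrite -?fa ?stellar_center.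
- by rewrite eG !inE eU !mem_cat => /or3P [->|/sP ->|->]; rewrite ?orbT.
Qed.

Lemma stellar_keep G : G \in D -> ~~ fsub F G -> G \in D'.
Proof. by move=> GD nF; apply/(stellar_mem (complex_face cD GD)); left. Qed.

Lemma stellar_new_face_sub G G' :
  G \in D' -> a \in G -> is_face G' -> {subset G' <= G} -> G' \in D'.
Proof.
move=> GD aG fG' sub; apply/(stellar_mem fG'); case aG': (a \in G'); last first.
  have [U [f [UD _ fF fG sGU]]] := stellar_new_face_cover GD aG.
  left; split; last by apply/negP => /fsubP /(_ f fF) /sub; apply/negP.
  apply: (complex_sub cD UD fG') => x xG'; move: (sGU x (sub x xG')); rewrite inE.
  by case/predU1P => [xa|//]; rewrite xa aG' in xG'.
have [P [H [U [[sP nP HD dj] [UD eU eG]]]]] := stellar_new_face GD aG.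
have subG' x : x \in G' -> [|| x == a, x \in P | x \in H].
  by move/sub; rewrite eG inE mem_cat.
right; exists [seq x <- P | x \in G'], [seq x <- H | x \in G'].
split; first by apply/fsubP => x; rewrite mem_filter => /andP [_ /sP].
split; first by apply: contra nP => /fsubP h; apply/fsubP => x /h; rewrite mem_filter => /andP [].
split; last first.
  move=> x; rewrite inE !mem_cat !mem_filter; apply/idP/idP => [xG'|].
    by case/or3P: (subG' x xG') => [->|->|->]; rewrite xG' ?orbT.
  by case/or3P => [/eqP ->|/andP [->]|/andP [->]].
have fH' : is_face [seq x <- H | x \in G'].
  by apply: sorted_filter; [apply: ltn_trans | apply: complex_face cD HD].
split; first by apply: (complex_sub cD HD fH') => x; rewrite mem_filter => /andP [].
split; first by move=> x /dj; apply: contra; rewrite mem_filter => /andP [].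
exists (canon (F ++ [seq x <- H | x \in G'])); last exact: mem_canon.
apply: (complex_canon cD UD) => x; rewrite eU !mem_cat mem_filter.
by case/orP => [->|/andP [_ ->]]; rewrite ?orbT.
Qed.

Lemma stellar_complex : is_complex D'.
Proof.
split=> [|G G' GD fG' /fsubP sub]; first exact: stellar_face.
case aG: (a \in G); first exact: stellar_new_face_sub GD aG fG' sub.
have [GD0 nF] := stellar_old_face GD (negbT aG).
apply/(stellar_mem fG'); left; split; first exact: (complex_sub cD GD0).
by apply: contra nF => /fsubP h; apply/fsubP => x /h /sub.
Qed.

Lemma stellar_vert_apex : vert D' a.
Proof.
have F0 : F != [::] by case: st => _ [].
exists [:: a]; last exact: mem_head.
apply/(stellar_mem _) => //; right; exists [::], [::].
split=> //; split; first by case: F F0.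
split=> //; split; first exact: (complex_sub cD stellar_center).
split=> //; exists F; [exact: stellar_center | by move=> x; rewrite cats0].
Qed.

Lemma stellar_vert v : vert D' v -> vert D v \/ v = a.
Proof.
move=> [G GD vG]; case aG: (a \in G); last first.
  by left; exists G => //; case: (stellar_old_face GD (negbT aG)).
have [U [f [UD _ _ _ sGU]]] := stellar_new_face_cover GD aG.
by case/predU1P: (sGU v vG) => [->|vU]; [right | left; exists U].
Qed.

Lemma stellar_adjacent x y : adjacent D' x y -> x != a -> y != a -> adjacent D x y.
Proof.
move=> /adjacentP [xy [G GD /andP [xG yG]]] xa ya; apply/adjacentP; split=> //.
case aG: (a \in G); last first.
  by exists G; [case: (stellar_old_face GD (negbT aG)) | rewrite xG].
have [U [f [UD _ _ _ sGU]]] := stellar_new_face_cover GD aG.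
have inU z : z \in G -> z != a -> z \in U by move/sGU; rewrite inE => /orP [->|].
by exists U; rewrite // !inU.
Qed.

End StellarSubdivision.

Section EdgeSubdivision.
Variables (D D' : seq (seq nat)) (p q a : nat).
Hypothesis cD : is_complex D.
Hypothesis st : stellar D [:: p; q] a D'.
Hypothesis pq : p < q.

Lemma edge_stellar_vert v : vert D v -> vert D' v.
Proof.
move=> [G GD vG]; exists [:: v]; last exact: mem_head.
apply: (stellar_keep cD st); first by apply: (complex_sub cD GD) => // x; rewrite inE => /eqP ->.
rewrite /fsub /= !inE andbT; apply/negP => /andP [/eqP e1 /eqP e2].
by move: pq; rewrite e1 e2 ltnn.
Qed.

Lemma edge_stellar_no_face G : G \in D' -> ~~ fsub [:: p; q] G.
Proof.
move=> GD; case aG: (a \in G); last first.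
  by case: (stellar_old_face st GD (negbT aG)).
have [P [H [U [[sP nP HD dj] [_ _ eG]]]]] := stellar_new_face st GD aG.
have [pa qa] : p != a /\ q != a.
  by split; apply/eqP => e; case: (stellar_apex_fresh st);
     exists [:: p; q]; rewrite ?(stellar_center st) // -e !inE eqxx ?orbT.
have [pH qH] : p \notin H /\ q \notin H by split; apply: dj; rewrite !inE eqxx ?orbT.
by move: nP; rewrite /fsub /= !eG !inE !mem_cat (negbTE pa) (negbTE qa) (negbTE pH) (negbTE qH) !orbF.
Qed.

Lemma edge_stellar_subcomplex K :
  is_complex K -> {subset K <= D} -> [:: p; q] \notin K -> {subset K <= D'}.
Proof.
move=> cK sKD nK G GK; apply: (stellar_keep cD st (sKD _ GK)).
apply: contra nK => /fsubP h; apply: (complex_sub cK GK) => //.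
by rewrite /is_face /= pq.
Qed.

End EdgeSubdivision.

Lemma stellar_seq_trans D1 D2 D3 :
  stellar_seq D1 D2 -> stellar_seq D2 D3 -> stellar_seq D1 D3.
Proof. by elim=> // D F a D' D'' st _ IH /IH; apply: ss_step st. Qed.

Section Coloring.
Variables (K : seq (seq nat)) (d : nat) (kappa : nat -> nat).
Hypothesis cK : is_complex K.

(* A coloring under construction: [col] marks the vertices colored so far and
   [c] gives their colors; monochromatic edges are tolerated and tracked by
   [conflict]. *)
Definition admissible D col c :=
  [/\ is_complex D, {subset K <= D},
      (forall F, F \in D -> F \notin K -> size F <= d.+1),
      (forall v, vert K v -> col v /\ c v = kappa v) &
      (forall v, vert D v -> col v -> ~ vert K v -> c v <= d)].

Definition conflict D col c x y :=
  [&& adjacent D x y, col x, col y & c x == c y].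

Lemma conflictC D col c x y : conflict D col c x y = conflict D col c y x.
Proof. by rewrite /conflict adjacentC eq_sym; case: (col x); case: (col y). Qed.

Lemma conflict_adjacent D col c x y : conflict D col c x y -> adjacent D x y.
Proof. by case/andP. Qed.

Lemma conflict_pair D col c x y w u :
  x \in [:: w; u] -> y \in [:: w; u] -> x != y -> conflict D col c w u -> conflict D col c x y.
Proof.
rewrite !inE => /orP [] /eqP -> /orP [] /eqP ->; rewrite ?eqxx //.
by rewrite conflictC.
Qed.

Definition nconflicts D col c w := count (conflict D col c w) (undup (flatten D)).

Definition rivals Phi col c G w :=
  count (fun x => [&& x != w, col x & c x \notin Phi]) G.

Definition rivals_le D col c Phi w n :=
  forall G, G \in D -> w \in G -> rivals Phi col c G w <= n.

Record extension Phi D col c D' col' c' : Prop := Extension {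
  ext_stellar : stellar_seq D D';
  ext_admissible : admissible D' col' c';
  ext_vert_old v : vert D v -> [/\ vert D' v, col' v = col v & c' v = c v];
  ext_vert_new v : vert D' v -> ~ vert D v -> col' v;
  ext_conflict x y : conflict D' col' c' x y -> conflict D col c x y;
  ext_rivals Ps v n : {subset Ps <= Phi} -> vert D v ->
    rivals_le D col c Ps v n -> rivals_le D' col' c' Ps v n }.

Definition resolution w Phi D col c D' col' c' :=
  extension Phi D col c D' col' c' /\ forall y, ~~ conflict D' col' c' w y.

Lemma resolution_refl w Phi D col c : admissible D col c ->
  (forall y, ~~ conflict D col c w y) -> resolution w Phi D col c D col c.
Proof. by move=> adm noc; split=> //; split=> //; apply: ss_refl. Qed.

Lemma extension_trans Phi D col c D' col' c' D'' col'' c'' :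
  extension Phi D col c D' col' c' -> extension Phi D' col' c' D'' col'' c'' ->
  extension Phi D col c D'' col'' c''.
Proof.
move=> [ss1 _ old1 new1 cf1 rv1] [ss2 adm2 old2 new2 cf2 rv2]; split=> //.
- exact: stellar_seq_trans ss1 ss2.
- move=> v vD; have [vD' <- <-] := old1 v vD.
  exact: old2.
- move=> v vD'' nvD; case: (boolP (v \in flatten D')) => [/vertP vD'|/vertP].
    by have [_ -> _] := old2 v vD'; apply: new1.
  exact: new2.
- by move=> x y /cf2 /cf1.
- move=> Ps v n sPs vD hn; have [vD' _ _] := old1 v vD.
  exact: rv2 sPs vD' (rv1 Ps v n sPs vD hn).
Qed.

(* [Phi] collects the colors forbidden at [w] and [n] bounds its rivals in every
   face; a color in [0..d] outside [c w :: Phi] for a new neighbor of [w] exists as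
   long as [size Phi + n <= d] and [n > 0]. *)
Record fixable D col c w Phi n : Prop := Fixable {
  fix_admissible : admissible D col c;
  fix_vert : vert D w;
  fix_notin_K : ~ vert K w;
  fix_colored : col w;
  fix_color : c w \notin Phi;
  fix_budget : size Phi + n <= d;
  fix_rivals : rivals_le D col c Phi w n }.

Lemma fixable_extension D col c w Phi n D' col' c' :
  fixable D col c w Phi n -> extension Phi D col c D' col' c' -> fixable D' col' c' w Phi n.
Proof.
move=> [_ wD wK cw cwPhi budget rv] ext; have [wD' cw' cc'] := ext_vert_old ext wD.
split=> //; [exact: ext_admissible ext | by rewrite cw' | by rewrite cc' |].
exact: (ext_rivals ext) rv.
Qed.

Lemma fixable_conflict_pos D col c w Phi n u :
  fixable D col c w Phi n -> conflict D col c w u -> 0 < n.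
Proof.
move=> fx /and4P [/adjacentP [wu [G GD /andP [wG uG]]] _ cu /eqP cwu].
apply: leq_trans (fix_rivals fx GD wG); rewrite /rivals -has_count; apply/hasP.
by exists u => //; rewrite eq_sym wu cu -cwu (fix_color fx).
Qed.

Section SubdivisionStep.
Variables (D : seq (seq nat)) (col : nat -> bool) (c : nat -> nat) (p q : nat).
Variables (col1 : nat -> bool) (c1 : nat -> nat).
Hypothesis adm : admissible D col c.
Hypothesis pq : p < q.
Hypothesis eD : [:: p; q] \in D.
Hypothesis eK : [:: p; q] \notin K.
Let a := fresh D.
Let D1 := sd_edge D p q a.
Hypothesis col1E : forall v, v != a -> col1 v = col v.
Hypothesis c1E : forall v, v != a -> c1 v = c v.
Hypothesis c1a : col1 a -> c1 a <= d.

Let cD : is_complex D. Proof. by case: adm. Qed.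

Lemma sd_stellar : stellar D [:: p; q] a D1.
Proof. by apply: sd_edge_stellar => //; apply: fresh_not_vert. Qed.

Let st := sd_stellar.

Lemma sd_vert_old v : vert D v -> [/\ vert D1 v, col1 v = col v & c1 v = c v].
Proof.
move=> vD; have va := fresh_neq vD; split.
- exact: (edge_stellar_vert cD st pq vD).
- by rewrite col1E.
- by rewrite c1E.
Qed.

Lemma sd_face_size G : G \in D1 -> G \notin K -> size G <= d.+1.
Proof.
case: adm => _ _ szD _ _ GD1 GK; case aG: (a \in G); last first.
  by have [GD _] := stellar_old_face st GD1 (negbT aG); apply: szD.
have [U [f [UD sFU fpq fG sGU]]] := stellar_new_face_cover st GD1 aG.
have UK : U \notin K.
  by apply: contra eK => UK; apply: (complex_sub cK UK) => //; rewrite /is_face /= pq.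
apply: leq_trans (szD _ UD UK); have fU := sFU f fpq.
apply: (@leq_trans (1 + (size U).-1)); last by rewrite add1n prednK //; case: (U) fU.
rewrite -!count_predT; apply: (count_le_rem (f := f) (e := [:: a])) => //.
- exact: face_uniq (stellar_face st GD1).
- exact: face_uniq (complex_face cD UD).
move=> x xG _; case/predU1P: (sGU x xG) => [->|xU]; [by left; rewrite mem_head | right].
by split=> //; apply: contraNneq fG => <-.
Qed.

Lemma sd_admissible : admissible D1 col1 c1.
Proof.
case: adm => _ sKD _ Kc Dc; split.
- exact: stellar_complex cD st.
- exact: (edge_stellar_subcomplex cD st pq cK sKD eK).
- exact: sd_face_size.
- move=> v vK; have vD : vert D v by case: vK => F FK vF; exists F => //; apply: sKD.
  by have [_ -> ->] := sd_vert_old vD; apply: Kc.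
- move=> v vD1; case: (eqVneq v a) => [-> /c1a //|va].
  rewrite col1E // c1E //; apply: Dc.
  by case: (stellar_vert st vD1) => // /eqP; rewrite (negbTE va).
Qed.

Lemma sd_conflict x y :
  conflict D1 col1 c1 x y -> x != a -> y != a -> conflict D col c x y.
Proof.
move=> /and4P [adj cx cy cxy] xa ya.
by rewrite /conflict (stellar_adjacent st adj xa ya) -!col1E // cx cy -!c1E.
Qed.

Lemma sd_not_adjacent x y : x \in [:: p; q] -> y \in [:: p; q] -> ~~ adjacent D1 x y.
Proof.
move=> xpq ypq; apply/negP => /adjacentP [xy [G GD1 /andP [xG yG]]].
have /negP := edge_stellar_no_face st GD1; apply; apply/fsubP => z.
move: xpq ypq xy xG yG; rewrite !inE.
by move=> /orP [] /eqP -> /orP [] /eqP ->; rewrite ?eqxx // => _ xG yG /orP [] /eqP ->.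
Qed.

Hypothesis pq_conflict : conflict D col c p q.

Let endpoint_color x : x \in [:: p; q] -> col x /\ c x = c p.
Proof.
case/and4P: pq_conflict => _ cp cq /eqP cpq.
by rewrite !inE => /orP [] /eqP ->.
Qed.

Lemma sd_rivals Ps v n : c p \notin Ps -> v != a ->
  rivals_le D col c Ps v n -> rivals_le D1 col1 c1 Ps v n.
Proof.
move=> cPs va hn G GD1 vG; case aG: (a \in G); last first.
  have [GD _] := stellar_old_face st GD1 (negbT aG).
  apply: leq_trans (hn _ GD vG); rewrite leq_eqVlt; apply/orP; left; apply/eqP.
  apply: eq_in_count => x xG; have xa : x != a by apply: contraNneq (negbT aG) => <-.
  by rewrite col1E ?c1E.
have [U [f [UD sFU fpq fG sGU]]] := stellar_new_face_cover st GD1 aG.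
have inU x : x \in G -> x != a -> x \in U by move/sGU; rewrite inE => /orP [->|].
set Q := fun x => [&& x != v, col x & c x \notin Ps].
have Qf : Q f.
  by rewrite /Q; have [-> ->] := endpoint_color fpq; rewrite cPs !andbT; apply: contraNneq fG => ->.
apply: leq_trans (hn _ UD (inU v vG va)).
apply: (@leq_trans (1 + (count Q U).-1)).
  apply: (count_le_rem (f := f) (e := [:: a])); rewrite ?sFU //.
  - exact: face_uniq (stellar_face st GD1).
  - exact: face_uniq (complex_face cD UD).
  move=> x xG; case: (eqVneq x a) => [-> _|xa]; first by left; rewrite mem_head.
  rewrite /= col1E // c1E // => /and3P [xv cx cxPs]; right.
  by rewrite /Q xv cx cxPs (inU x xG xa); split=> //; apply: contraNneq fG => <-.
by rewrite add1n prednK // -has_count; apply/hasP; exists f; rewrite ?sFU.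
Qed.

Lemma sd_rivals_apex Phi w u n :
  w \in [:: p; q] -> u \in [:: p; q] -> w != u -> c w \notin Phi ->
  rivals_le D col c Phi w n -> rivals_le D1 col1 c1 (c w :: Phi) a n.-1.
Proof.
move=> wpq upq wu cPhi hn G GD1 aG.
have [U [f [UD sFU _ _ sGU]]] := stellar_new_face_cover st GD1 aG.
have [[_ cw] [cu_col cu]] := (endpoint_color wpq, endpoint_color upq).
set Q := fun x => [&& x != w, col x & c x \notin Phi].
have Qu : Q u by rewrite /Q eq_sym wu cu_col cu -cw cPhi.
apply: leq_trans (_ : (count Q U).-1 <= n.-1); last by rewrite -!subn1 leq_sub2r // hn ?sFU.
rewrite -[X in X <= _]add0n; apply: (count_le_rem (f := u) (e := [::])); rewrite ?sFU //.
- exact: face_uniq (stellar_face st GD1).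
- exact: face_uniq (complex_face cD UD).
move=> x xG /and3P [xa]; rewrite col1E // c1E // inE negb_or => cx /andP [cxw cxPhi].
have xU : x \in U by move: (sGU x xG); rewrite inE (negbTE xa).
right; rewrite /Q cx cxPhi xU !andbT; split=> //; apply: contraNneq cxw => ->//.
by rewrite cu cw.
Qed.

Lemma sd_fixable_apex w u Phi n :
  w \in [:: p; q] -> u \in [:: p; q] -> w != u -> col1 a -> c1 a \notin c w :: Phi ->
  fixable D col c w Phi n.+1 -> fixable D1 col1 c1 a (c w :: Phi) n.
Proof.
move=> wpq upq wu ca cfree [_ _ _ _ cwPhi budget rv]; split=> //.
- exact: sd_admissible.
- exact: stellar_vert_apex cD st.
- case=> F FK aF; apply: (@fresh_not_vert D); exists F => //.
  by case: adm => _ sKD _ _ _; apply: sKD.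
- by rewrite /= addSnnS.
- exact: sd_rivals_apex wpq upq wu cwPhi rv.
Qed.

Lemma subdivide_then_resolve Phi Phi' D2 col2 c2 :
  c p \notin Phi -> {subset Phi <= Phi'} -> col1 a ->
  resolution a Phi' D1 col1 c1 D2 col2 c2 -> extension Phi D col c D2 col2 c2.
Proof.
move=> cpPhi sPhi ca [[ss2 adm2 old2 new2 cf2 rv2] noc2]; split=> //.
- exact: ss_step st ss2.
- by move=> v vD; have [vD1 <- <-] := sd_vert_old vD; apply: old2.
- move=> v vD2 nvD; case: (boolP (v \in flatten D1)) => [/vertP vD1|/vertP]; last exact: new2.
  have [_ -> _] := old2 v vD1.
  by case: (stellar_vert st vD1) => // ->.
- move=> x y cxy.
  have xa : x != a by apply: contraNneq (noc2 y) => <-.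
  have ya : y != a by apply: contraNneq (noc2 x) => <-; rewrite conflictC.
  exact: sd_conflict (cf2 _ _ cxy) xa ya.
- move=> Ps v n sPs vD hn; have [vD1 _ _] := sd_vert_old vD.
  apply: rv2 vD1 _ => [z /sPs /sPhi //|].
  by apply: sd_rivals (fresh_neq vD) hn; apply: contra cpPhi; apply: sPs.
Qed.

Lemma subdivide_resolve_progress w u Phi n D2 col2 c2 :
  w \in [:: p; q] -> u \in [:: p; q] -> conflict D col c w u -> col1 a ->
  fixable D col c w Phi n -> resolution a (c w :: Phi) D1 col1 c1 D2 col2 c2 ->
  [/\ extension Phi D col c D2 col2 c2, fixable D2 col2 c2 w Phi n &
      nconflicts D2 col2 c2 w < nconflicts D col c w].
Proof.
move=> wpq upq cwu ca fx res2.
have cpw : c p = c w by have [_ ->] := endpoint_color wpq.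
have sPhi : {subset Phi <= c w :: Phi} by move=> x; rewrite inE orbC => ->.
have cpPhi : c p \notin Phi by rewrite cpw (fix_color fx).
have ext := subdivide_then_resolve cpPhi sPhi ca res2.
split=> //; first exact: fixable_extension fx ext.
have [_ uD] := adjacent_vert (conflict_adjacent cwu).
apply: (count_undup_lt (f := u)) => //; first exact/vertP.
move=> y _ cwy; have cwy0 := ext_conflict ext cwy.
split=> //; last by apply/vertP; case: (adjacent_vert (conflict_adjacent cwy0)).
apply: contraNneq (sd_not_adjacent wpq upq) => <-.
exact: conflict_adjacent (ext_conflict res2.1 cwy).
Qed.

End SubdivisionStep.

Lemma resolve_step n D col c w Phi u :
  (forall D col c w Phi, fixable D col c w Phi n ->
     exists D' col' c', resolution w Phi D col c D' col' c') ->
  fixable D col c w Phi n.+1 -> conflict D col c w u ->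
  exists D' col' c', [/\ extension Phi D col c D' col' c', fixable D' col' c' w Phi n.+1 &
                         nconflicts D' col' c' w < nconflicts D col c w].
Proof.
move=> IHn fx cwu; have [adm _ wK _ _ budget _] := fx.
have cD : is_complex D by case: adm.
have adj := conflict_adjacent cwu; have /andP [wu _] := adj.
have [p [q [pq eD epq]]] := adjacent_edge cD adj.
have [wpq upq] : w \in [:: p; q] /\ u \in [:: p; q] by rewrite !epq !inE !eqxx ?orbT.
have pqc : conflict D col c p q.
  by apply: conflict_pair cwu; rewrite -?epq ?mem_head ?inE ?eqxx ?orbT ?ltn_eqF.
have eK : [:: p; q] \notin K by apply/negP => eK; apply: wK; exists [:: p; q].
have [z zd zfree] : exists2 z, z <= d & z \notin c w :: Phi.
  by apply: pick_color; apply: leq_trans budget; rewrite /= -addn1 leq_add2l.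
pose a := fresh D; pose col1 v := (v == a) || col v.
pose c1 v := if v == a then z else c v.
have col1E v : v != a -> col1 v = col v by rewrite /col1 => /negbTE ->.
have c1E v : v != a -> c1 v = c v by rewrite /c1 => /negbTE ->.
have ca : col1 a by rewrite /col1 eqxx.
have [c1ad c1free] : (col1 a -> c1 a <= d) /\ c1 a \notin c w :: Phi by rewrite /c1 eqxx.
have fx1 := sd_fixable_apex adm pq eD eK col1E c1E c1ad pqc wpq upq wu ca c1free fx.
have [D2 [col2 [c2 res2]]] := IHn _ _ _ _ _ fx1.
exists D2, col2, c2.
exact: (subdivide_resolve_progress adm pq eD col1E c1E pqc wpq upq cwu ca fx res2).
Qed.

Lemma resolve n D col c w Phi : fixable D col c w Phi n ->
  exists D' col' c', resolution w Phi D col c D' col' c'.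
Proof.
elim: n D col c w Phi => [|n IHn] D col c w Phi fx.
  exists D, col, c; apply: resolution_refl (fix_admissible fx) _ => y.
  by apply/negP => /(fixable_conflict_pos fx).
have [k] := ubnP (nconflicts D col c w); elim: k => // k IHk in D col c fx *.
rewrite ltnS => hk.
have [/hasP [u _ cwu]|/hasPn noc] := boolP (has (conflict D col c w) (undup (flatten D))).
  have [D2 [col2 [c2 [ext2 fx2 lt2]]]] := resolve_step IHn fx cwu.
  have [D3 [col3 [c3 [ext3 noc3]]]] := IHk _ _ _ fx2 (leq_trans lt2 hk).
  by exists D3, col3, c3; split; first exact: extension_trans ext2 ext3.
exists D, col, c; apply: resolution_refl (fix_admissible fx) _ => y.
apply/negP => cwy; have yD : y \in undup (flatten D).
  by rewrite mem_undup; apply/vertP; case: (adjacent_vert (conflict_adjacent cwy)).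
by have := noc y yD; rewrite cwy.
Qed.

Lemma rivals_top D col c g : admissible D col c -> ~ vert K g -> rivals_le D col c [::] g d.
Proof.
move=> [cD _ szD _ _] gK G GD gG.
have GK : G \notin K by apply/negP => GK; apply: gK; exists G.
apply: leq_trans (_ : count (predC (pred1 g)) G <= d); first by apply: sub_count => x /and3P [].
have := count_predC (pred1 g) G.
rewrite (count_uniq_mem _ (face_uniq (complex_face cD GD))) gG add1n => sizeG.
by rewrite -ltnS sizeG; apply: szD.
Qed.

Definition nuncolored D col := count (predC col) (undup (flatten D)).

Lemma color_vertex D col c g :
  admissible D col c -> (forall x y, ~~ conflict D col c x y) -> vert D g -> ~~ col g ->
  exists D' col' c', [/\ stellar_seq D D', admissible D' col' c',
    forall x y, ~~ conflict D' col' c' x y & nuncolored D' col' < nuncolored D col].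
Proof.
move=> adm noc gD cg; have [cD sKD szD Kc Dc] := adm.
have gK : ~ vert K g by move/Kc => [cg' _]; rewrite cg' in cg.
pose col1 v := (v == g) || col v; pose c1 v := if v == g then 0 else c v.
have col1E v : v != g -> col1 v = col v by rewrite /col1 => /negbTE ->.
have c1E v : v != g -> c1 v = c v by rewrite /c1 => /negbTE ->.
have adm1 : admissible D col1 c1.
  split=> // [v vK|v vD]; last first.
    case: (eqVneq v g) => [-> _ _|vg]; first by rewrite /c1 eqxx.
    by rewrite col1E ?c1E //; apply: Dc.
  have vg : v != g by apply: contraPneq gK => <-.
  by rewrite col1E ?c1E //; apply: Kc.
have fx : fixable D col1 c1 g [::] d.
  by split=> //; [rewrite /col1 eqxx | apply: rivals_top adm1 gK].
have [D' [col' [c' [ext noc']]]] := resolve fx.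
exists D', col', c'; split; [exact: ext_stellar ext | exact: ext_admissible ext | |].
  move=> x y; apply/negP => cxy; have /and4P [adj cx cy cxy1] := ext_conflict ext cxy.
  have xg : x != g by apply: contraNneq (noc' y) => <-.
  have yg : y != g by apply: contraNneq (noc' x) => <-; rewrite conflictC.
  have := noc x y; rewrite /conflict adj -(col1E x xg) -(col1E y yg) cx cy.
  by rewrite -(c1E x xg) -(c1E y yg) cxy1.
apply: (count_undup_lt (f := g)); [exact/vertP | exact: cg |].
move=> v /vertP vD' /= ncv; case: (boolP (v \in flatten D)) => [/vertP vD|/vertP nvD]; last first.
  by rewrite (ext_vert_new ext vD' nvD) in ncv.
have [_ cv _] := ext_vert_old ext vD; rewrite cv in ncv.
have vg : v != g by apply: contraNneq ncv => ->; rewrite /col1 eqxx.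
by rewrite vg -(col1E v vg) ncv.
Qed.

Lemma color_all D col c :
  admissible D col c -> (forall x y, ~~ conflict D col c x y) ->
  exists D' col' c', [/\ stellar_seq D D', admissible D' col' c',
    forall x y, ~~ conflict D' col' c' x y & forall v, vert D' v -> col' v].
Proof.
have [k] := ubnP (nuncolored D col); elim: k => // k IHk in D col c *.
rewrite ltnS => hk adm noc.
have [/hasP [g gD cg]|/hasPn allc] := boolP (has (predC col) (undup (flatten D))).
  rewrite mem_undup in gD; move/vertP: gD => gD.
  have [D1 [col1 [c1 [ss1 adm1 noc1 lt1]]]] := color_vertex adm noc gD cg.
  have [D2 [col2 [c2 [ss2 adm2 noc2 all2]]]] := IHk _ _ _ (leq_trans lt1 hk) adm1 noc1.
  by exists D2, col2, c2; split=> //; apply: stellar_seq_trans ss1 ss2.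
exists D, col, c; split=> //; first exact: ss_refl.
by move=> v /vertP vD; have := allc v; rewrite mem_undup vD negbK; apply.
Qed.

Hypothesis kappa_proper : forall x y, [:: x; y] \in K -> kappa x != kappa y.

Definition conflict_edge col c F :=
  if F is [:: x; y] then [&& col x, col y & c x == c y] else false.

Definition nconflict_edges D col c := count (conflict_edge col c) (undup D).

Lemma split_conflict_edge D col c F :
  admissible D col c -> F \in D -> conflict_edge col c F ->
  exists D' col', [/\ stellar_seq D D', admissible D' col' c &
                      nconflict_edges D' col' c < nconflict_edges D col c].
Proof.
move=> adm FD; have [cD _ _ Kc _] := adm.
case: F FD => [|p [|q []]] //= eD /and3P [cp cq /eqP cpq].
have pq : p < q by have := complex_face cD eD; rewrite /is_face /= andbT.
have eK : [:: p; q] \notin K.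
  apply/negP => eK; have := kappa_proper eK.
  have [_ <-] : col p /\ c p = kappa p by apply: Kc; exists [:: p; q]; rewrite ?mem_head.
  have [_ <-] : col q /\ c q = kappa q by apply: Kc; exists [:: p; q]; rewrite ?inE ?eqxx ?orbT.
  by rewrite cpq eqxx.
pose a := fresh D; pose col1 v := (v != a) && col v.
have col1E v : v != a -> col1 v = col v by rewrite /col1 => ->.
have st := sd_stellar adm pq eD.
exists (sd_edge D p q a), col1; split; first exact: ss_step st (ss_refl _).
  by apply: (sd_admissible adm pq eD eK col1E) => //; rewrite /col1 eqxx.
apply: (count_undup_lt (f := [:: p; q])) => //=; first by rewrite cp cq cpq /=.
case=> [|x [|y []]] //= GD1 /and3P [/andP [xa cx] /andP [ya cy] cxy].
have aG : a \notin [:: x; y] by rewrite !inE negb_or eq_sym xa eq_sym ya.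
have [GD nF] := stellar_old_face st GD1 aG.
split=> //; last by rewrite cx cy.
by apply: contraNneq nF => [[-> ->]]; rewrite /fsub /= !inE !eqxx orbT.
Qed.

Lemma remove_conflicts D col c : admissible D col c ->
  exists D' col', [/\ stellar_seq D D', admissible D' col' c & forall x y, ~~ conflict D' col' c x y].
Proof.
have [k] := ubnP (nconflict_edges D col c); elim: k => // k IHk in D col *.
rewrite ltnS => hk adm.
have [/hasP [F FD cF]|/hasPn noc] := boolP (has (conflict_edge col c) (undup D)).
  rewrite mem_undup in FD; have [D1 [col1 [ss1 adm1 lt1]]] := split_conflict_edge adm FD cF.
  have [D2 [col2 [ss2 adm2 noc2]]] := IHk _ _ (leq_trans lt1 hk) adm1.
  by exists D2, col2; split=> //; apply: stellar_seq_trans ss1 ss2.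
exists D, col; split=> //; first exact: ss_refl.
have cD : is_complex D by case: adm.
move=> x y; wlog xy : x y / x < y.
  move=> IH; case: (ltngtP x y) => [/IH //|/IH|->]; first by rewrite conflictC.
  by rewrite /conflict /adjacent eqxx.
apply/negP => /and4P [adj cx cy cxy]; have eD := adjacent_edge_sorted cD adj xy.
by have := noc [:: x; y]; rewrite mem_undup eD /= cx cy cxy => /(_ isT).
Qed.

End Coloring.

Theorem theorem3p1 (L K : seq (seq nat)) (d m : nat) (kappa : nat -> nat) :
  is_complex L -> is_complex K -> {subset K <= L} ->
  rel_dim L K d ->
  proper_coloring K kappa m ->
  exists (L' : seq (seq nat)) (kappa' : nat -> nat),
    [/\ stellar_seq L L',
        {subset K <= L'},
        (forall v, vert K v -> kappa' v = kappa v),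
        proper_coloring L' kappa' (maxn m d.+1) &
        (forall v, vert L' v -> ~ vert K v -> kappa' v <= d)].
Proof.
move=> cL cK sKL [_ szL] [kappa_lt kappa_proper].
pose colK v := v \in flatten K.
have adm : admissible K d kappa L colK kappa.
  split=> // [v vK | v _ vK []]; last exact/vertP.
  by split=> //; apply/vertP.
have [L1 [col1 [ss1 adm1 noc1]]] := remove_conflicts cK kappa_proper adm.
have [L' [col' [c' [ss2 [cL' sKL' _ Kc Lc] noc' allc]]]] := color_all cK adm1 noc1.
exists L', c'; split=> //; first exact: stellar_seq_trans ss1 ss2.
- by move=> v /Kc [].
- split=> [v vL'|x y eL']; last first.
    have [vx vy] := adjacent_vert (edge_adjacent cL' eL').
    by have := noc' x y; rewrite /conflict edge_adjacent // !allc.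
  have [vK|nvK] := boolP (v \in flatten K).
    move/vertP: vK => vK; have [_ ->] := Kc v vK.
    exact: leq_trans (kappa_lt v vK) (leq_maxl _ _).
  apply: leq_trans (leq_maxr m d.+1); rewrite ltnS Lc ?allc // => /vertP.
  by rewrite (negbTE nvK).
- by move=> v vL' nvK; apply: Lc; rewrite ?allc.
Qed.
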